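(* Let $Q\in\mathbb R^{3\times3}$ be symmetric positive semi-definite with eigenvalues $\lambda_1^Q,\lambda_2^Q,\lambda_3^Q$, let $\mathbb U\subset\mathbb S^2$ be a finite set, and let $\Delta_Q^*:=\min_{v\in\mathcal E(Q)}\max_{u\in\mathbb U}\Delta_Q(u,v)$ with $\Delta_Q(u,v)=u^\top\big((\mathrm{tr}(Q)-2v^\top Qv)I_3-Q+2Qvv^\top\big)u$. (1) If $\mathbb U$ contains an orthonormal basis of $\mathbb R^3$ consisting of eigenvectors of $Q$, then: if $\lambda_1^Q=\lambda_2^Q=\lambda_3^Q>0$, $\Delta_Q^*\ge\frac23\lambda_1^Q$; if $\lambda_1^Q=\lambda_2^Q\ne\lambda_3^Q$ (with $\lambda_3^Q>0$), $\Delta_Q^*\ge\min\{\lambda_1^Q+\lambda_2^Q,\lambda_3^Q\}$; if the three eigenvalues are pairwise distinct, $\Delta_Q^*\ge\mathrm{tr}(Q)-\lambda_{\max}^Q$. (2) If $\mathrm{tr}(Q)-2\lambda_{\max}^Q>0$ and $\mathbb U$ contains some three mutually orthogonal unit vectors, then $\Delta_Q^*\ge\frac23(\mathrm{tr}(Q)-2\lambda_{\max}^Q)$.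
   Context: $\mathbb S^2$ is the set of unit vectors in $\mathbb R^3$. $\mathcal E(Q)$ denotes the set of all unit eigenvectors of $Q$. $\lambda_{\max}^Q$ is the largest eigenvalue of $Q$. *)

From HB Require Import structures.
From mathcomp Require Import all_boot all_order all_algebra.
Set Implicit Arguments. Unset Strict Implicit. Unset Printing Implicit Defensive.
Import Order.TTheory GRing.Theory Num.Theory.
Local Open Scope ring_scope.

Definition dotv (R : rcfType) (x y : 'cV[R]_3) : R := (x^T *m y) 0 0.

Definition unitv (R : rcfType) (x : 'cV[R]_3) : Prop := dotv x x = 1.

Definition symmetric_mx (R : rcfType) (Q : 'M[R]_3) : Prop := Q^T = Q.

Definition psd_mx (R : rcfType) (Q : 'M[R]_3) : Prop :=
  forall x : 'cV[R]_3, 0 <= dotv x (Q *m x).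

Definition unit_eigvec (R : rcfType) (Q : 'M[R]_3) (v : 'cV[R]_3) : Prop :=
  unitv v /\ exists a : R, Q *m v = a *: v.

Definition DeltaQ (R : rcfType) (Q : 'M[R]_3) (u v : 'cV[R]_3) : R :=
  dotv u (((\tr Q - 2 * dotv v (Q *m v))%:M - Q + 2 *: (Q *m v *m v^T)) *m u).

(* maximum of f over a (nonempty) finite list s; 0 on the empty list *)
Definition maxseq (R : rcfType) (T : Type) (f : T -> R) (s : seq T) : R :=
  match s with
  | [::] => 0
  | x :: s' => \big[Num.max/f x]_(y <- s') f y
  end.

Definition maxDelta (R : rcfType) (Q : 'M[R]_3) (U : seq 'cV[R]_3) (v : 'cV[R]_3) : R :=
  maxseq (fun u => DeltaQ Q u v) U.

(* Delta_Q^* >= c, where Delta_Q^* = min_{v in E(Q)} max_{u in U} Delta_Q(u,v) *)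
Definition DeltaStar_ge (R : rcfType) (Q : 'M[R]_3) (U : seq 'cV[R]_3) (c : R) : Prop :=
  forall v, unit_eigvec Q v -> c <= maxDelta Q U v.

Definition orthonormal3 (R : rcfType) (e1 e2 e3 : 'cV[R]_3) : Prop :=
  [/\ unitv e1, unitv e2, unitv e3 &
   [/\ dotv e1 e2 = 0, dotv e1 e3 = 0 & dotv e2 e3 = 0]].

From HB Require Import structures.
From mathcomp Require Import all_boot all_order all_algebra ring lra.
Import Order.TTheory GRing.Theory Num.Theory.
Local Open Scope ring_scope.
Set Implicit Arguments. Unset Strict Implicit. Unset Printing Implicit Defensive.

(* For a unit eigenvector v of Q with eigenvalue a and a unit vector u,
   Delta_Q(u, v) = tr Q - 2a - u^T Q u + 2a (u.v)^2.  Summed over an orthonormal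
   basis this is 2 tr Q - 4a, so max_u Delta_Q(u, v) >= (2 tr Q - 4a) / 3 with
   a <= lambda_max: this is (2) and the case of a triple eigenvalue.  If the basis
   consists of eigenvectors, v is orthogonal to those whose eigenvalue is not a;
   summing over the k basis vectors with eigenvalue a gives
   k (tr Q - 3a) + 2a <= k max_u Delta_Q(u, v), and k = 1 for a simple eigenvalue,
   k = 2 for a double one. *)

Section DeltaBounds.
Variable R : rcfType.
Implicit Types (x y : 'cV[R]_3) (Q : 'M[R]_3).

Lemma dotvE x y : dotv x y = \sum_i x i 0 * y i 0.
Proof. by rewrite /dotv !mxE; apply: eq_bigr => i _; rewrite mxE. Qed.

Lemma dotvC x y : dotv x y = dotv y x.
Proof. by rewrite !dotvE; apply: eq_bigr => i _; rewrite mulrC. Qed.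

Lemma dotvDr x y z : dotv x (y + z) = dotv x y + dotv x z.
Proof. by rewrite /dotv mulmxDr mxE. Qed.

Lemma dotvNr x y : dotv x (- y) = - dotv x y.
Proof. by rewrite /dotv mulmxN mxE. Qed.

Lemma dotvZr x y c : dotv x (c *: y) = c * dotv x y.
Proof. by rewrite /dotv -scalemxAr mxE. Qed.

Lemma dotv_eq0 x : (dotv x x == 0) = (x == 0).
Proof.
apply/eqP/eqP => [|->]; last by rewrite /dotv mulmx0 mxE.
rewrite dotvE => /psumr_eq0P x2_eq0; apply/matrixP => i j; rewrite (ord1 j) mxE.
by apply/eqP; rewrite -sqrf_eq0 expr2 x2_eq0 // => k _; rewrite -expr2 sqr_ge0.
Qed.

Lemma unitv_neq0 x : unitv x -> x != 0.
Proof. by rewrite /unitv -dotv_eq0 => ->; rewrite oner_eq0. Qed.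

Lemma dotv_mulmx_sym Q x y : Q^T = Q -> dotv x (Q *m y) = dotv (Q *m x) y.
Proof. by move=> Qsym; rewrite /dotv trmx_mul Qsym mulmxA. Qed.

Lemma dotv_eigenvectors Q x y a b : Q^T = Q ->
  Q *m x = a *: x -> Q *m y = b *: y -> a != b -> dotv x y = 0.
Proof.
move=> Qsym Qx Qy neq_ab.
have : a * dotv x y = b * dotv x y.
  by rewrite -[b * _]dotvZr -Qy dotv_mulmx_sym // Qx [dotv (_ *: _) _]dotvC dotvZr dotvC.
by move/eqP; rewrite -subr_eq0 -mulrBl mulf_eq0 subr_eq0 (negbTE neq_ab) => /eqP.
Qed.

Lemma DeltaQ_eigenvector Q u v a : Q *m v = a *: v -> unitv v ->
  DeltaQ Q u v = (\tr Q - 2 * a) * dotv u u - dotv u (Q *m u) + 2 * a * dotv u v ^+ 2.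
Proof.
move=> Qv v_unit; rewrite /DeltaQ Qv dotvZr v_unit mulr1.
rewrite mulmxDl mulmxBl mul_scalar_mx -scalemxAl -mulmxA [v^T *m u]mx11_scalar.
by rewrite mul_mx_scalar !dotvDr dotvNr !dotvZr -/(dotv v u) [dotv v u]dotvC; ring.
Qed.

Lemma le_maxseq (T : eqType) (f : T -> R) s u : u \in s -> f u <= maxseq f s.
Proof.
case: s => [//|x s]; rewrite inE => /predU1P[->|u_s]; first exact: bigmax_ge_id.
exact: le_bigmax_seq.
Qed.

Lemma root_char_poly_symP Q a : Q^T = Q ->
  reflect (exists2 x : 'cV[R]_3, x != 0 & Q *m x = a *: x) (root (char_poly Q) a).
Proof.
move=> Qsym; rewrite -eigenvalue_root_char.
apply: (iffP eigenvalueP) => [[w wQ w_neq0]|[x x_neq0 Qx]].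
  by exists w^T; rewrite ?trmx_eq0 // -Qsym -trmx_mul wQ linearZ.
by exists x^T; rewrite ?trmx_eq0 // -Qsym -trmx_mul Qx linearZ.
Qed.

Lemma mxtrace_char_poly3 Q l1 l2 l3 :
  char_poly Q = ('X - l1%:P) * ('X - l2%:P) * ('X - l3%:P) -> \tr Q = l1 + l2 + l3.
Proof.
move=> charQ; apply: oppr_inj; rewrite -(char_poly_trace Q isT) charQ.
rewrite !(mulrBl, mulrBr) !coefB !(coefMX, coefMC, coefCM, coefX, coefC) /=.
ring.
Qed.

Section Basis.
Variable e : 'I_3 -> 'cV[R]_3.
Hypothesis e_orthonormal : forall i j, dotv (e i) (e j) = (i == j)%:R.

Let E : 'M[R]_3 := \matrix_(i, j) e j i 0.

Let coordE z i : (E^T *m z) i 0 = dotv (e i) z.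
Proof. by rewrite dotvE !mxE; apply: eq_bigr => k _; rewrite !mxE. Qed.

Let mulmx_trE : E *m E^T = 1%:M.
Proof.
apply: mulmx1C; apply/matrixP => i j.
by rewrite [RHS]mxE -e_orthonormal dotvE !mxE; apply: eq_bigr => k _; rewrite !mxE.
Qed.

Lemma dotv_basis x y : dotv x y = \sum_i dotv (e i) x * dotv (e i) y.
Proof.
have -> : dotv x y = ((E^T *m x)^T *m (E^T *m y)) 0 0.
  by rewrite /dotv trmx_mul trmxK !mulmxA -(mulmxA _ E) mulmx_trE mulmx1.
by rewrite mxE; apply: eq_bigr => i _; rewrite mxE !coordE.
Qed.

Lemma mxtrace_basis Q : \tr Q = \sum_i dotv (e i) (Q *m e i).
Proof.
have -> : \tr Q = \tr (E^T *m (Q *m E)) by rewrite mxtrace_mulC -mulmxA mulmx_trE mulmx1.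
apply: eq_bigr => i _; rewrite dotvE !mxE; apply: eq_bigr => k _; rewrite !mxE.
by congr (_ * _); apply: eq_bigr => l _; rewrite !mxE.
Qed.

Section Eigenbasis.
Variables (Q : 'M[R]_3) (m : 'I_3 -> R).
Hypotheses (Qsym : Q^T = Q) (Qe : forall i, Q *m e i = m i *: e i).

Lemma dotv_eigenbasis i : dotv (e i) (Q *m e i) = m i.
Proof. by rewrite Qe dotvZr e_orthonormal eqxx mulr1. Qed.

Lemma mxtrace_eigenbasis : \tr Q = \sum_i m i.
Proof. by rewrite mxtrace_basis; apply: eq_bigr => i _; rewrite dotv_eigenbasis. Qed.

Lemma eigenvalue_eigenbasis x b : x != 0 -> Q *m x = b *: x -> exists i, m i = b.
Proof.
move=> x_neq0 Qx; case: (pickP (fun i => m i == b)) => [i /eqP|m_neq_b]; first by exists i.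
have coord0 i : dotv (e i) x = 0 by apply: (dotv_eigenvectors Qsym (Qe i) Qx); rewrite m_neq_b.
move: x_neq0; rewrite -dotv_eq0 dotv_basis big1 ?eqxx // => i _.
by rewrite coord0 mul0r.
Qed.

Lemma eigenbasis_inj (s : seq R) :
  uniq s -> size s = 3%N -> (forall b, b \in s -> root (char_poly Q) b) -> injective m.
Proof.
move=> s_uniq s_size s_roots; apply/injectiveP; apply: (leq_size_uniq s_uniq).
  move=> b /s_roots /(root_char_poly_symP _ Qsym) [x x_neq0 Qx].
  by have [i <-] := eigenvalue_eigenbasis x_neq0 Qx; apply: codom_f.
by rewrite size_codom card_ord s_size.
Qed.

Lemma card_eigenvalues2 p q : p != q -> (forall i, m i = p \/ m i = q) ->
  \tr Q = p + p + q -> #|[pred i | m i == q]| = 1%N /\ #|[pred i | m i == p]| = 2%N.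
Proof.
move=> neq_pq m_pq trQ.
have m_p i : (m i == p) = (m i != q).
  by case: (m_pq i) => ->; rewrite ?eqxx ?(negbTE neq_pq) // eq_sym (negbTE neq_pq).
have card_p : #|[pred i | m i == p]| = (#|'I_3| - #|[pred i | m i == q]|)%N.
  rewrite -(cardC [pred i | m i == q]) addKn.
  by apply: eq_card => i; rewrite !inE m_p.
have : \tr Q = q *+ #|[pred i | m i == q]| + p *+ #|[pred i | m i == p]|.
  rewrite mxtrace_eigenbasis (bigID (fun i => m i == q)) /= -!sumr_const.
  by congr (_ + _); apply: eq_big => i; rewrite ?inE ?m_p // -?m_p => /eqP.
have := max_card [pred i | m i == q]; rewrite card_p !card_ord trQ.
case: #|_| => [|[|[|[|//]]]] _ //=; rewrite !mulrS !mulr0n => trQ'.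
all: by case/eqP: neq_pq; lra.
Qed.

End Eigenbasis.

Section DeltaOnBasis.
Variables (Q : 'M[R]_3) (U : seq 'cV[R]_3) (v : 'cV[R]_3) (a : R).
Hypotheses (eU : forall i, e i \in U) (v_unit : unitv v) (Qv : Q *m v = a *: v).

Lemma sum_DeltaQ_basis (J : {pred 'I_3}) : (forall i, i \notin J -> dotv (e i) v = 0) ->
  \sum_(i in J) DeltaQ Q (e i) v =
    (\tr Q - 2 * a) *+ #|J| - \sum_(i in J) dotv (e i) (Q *m e i) + 2 * a.
Proof.
move=> vJ; have coord2_sum : \sum_(i in J) dotv (e i) v ^+ 2 = 1.
  rewrite big_mkcond -[1]v_unit dotv_basis; apply: eq_bigr => i _.
  by case: ifPn => [_|/vJ ->]; rewrite ?expr2 // mul0r.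
under eq_bigr do rewrite (DeltaQ_eigenvector _ Qv v_unit) e_orthonormal eqxx mulr1.
by rewrite big_split sumrB /= -mulr_sumr coord2_sum mulr1 sumr_const.
Qed.

Lemma sum_DeltaQ_le_maxDelta (J : {pred 'I_3}) :
  \sum_(i in J) DeltaQ Q (e i) v <= maxDelta Q U v *+ #|J|.
Proof. by rewrite -sumr_const; apply: ler_sum => i _; exact: (le_maxseq _ (eU i)). Qed.

Lemma maxDelta_ge_trace : 2 * \tr Q - 4 * a <= 3 * maxDelta Q U v.
Proof.
have := sum_DeltaQ_le_maxDelta predT; rewrite sum_DeltaQ_basis // -mxtrace_basis card_ord.
lra.
Qed.

Lemma maxDelta_ge_eigenspace (m : 'I_3 -> R) k :
  Q^T = Q -> (forall i, Q *m e i = m i *: e i) -> #|[pred i | m i == a]| = k ->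
  (\tr Q - 3 * a) *+ k + 2 * a <= maxDelta Q U v *+ k.
Proof.
move=> Qsym Qe card_a; have := sum_DeltaQ_le_maxDelta [pred i | m i == a].
rewrite sum_DeltaQ_basis => [|i]; last first.
  by rewrite inE => m_neq_a; apply: (dotv_eigenvectors Qsym (Qe i) Qv).
rewrite (eq_bigr (fun=> a)) => [|i /eqP m_a]; last by rewrite (dotv_eigenbasis Qe) m_a.
by rewrite sumr_const card_a; lra.
Qed.

End DeltaOnBasis.

Section DeltaStar.
Variables (Q : 'M[R]_3) (U : seq 'cV[R]_3).
Hypotheses (Qsym : Q^T = Q) (eU : forall i, e i \in U).

Lemma DeltaStar_ge_orthonormal L : (forall b, root (char_poly Q) b -> b <= L) ->
  DeltaStar_ge Q U (2 / 3 * (\tr Q - 2 * L)).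
Proof.
move=> le_L v [v_unit [a Qv]].
have a_le_L : a <= L.
  by apply/le_L/(root_char_poly_symP _ Qsym); exists v => //; apply: unitv_neq0.
by have := maxDelta_ge_trace eU v_unit Qv; lra.
Qed.

Variable m : 'I_3 -> R.
Hypothesis Qe : forall i, Q *m e i = m i *: e i.

Lemma DeltaStar_ge_simple_spectrum L : injective m -> (forall i, m i <= L) ->
  DeltaStar_ge Q U (\tr Q - L).
Proof.
move=> m_inj le_L v [v_unit [a Qv]].
have [j m_j] := eigenvalue_eigenbasis Qsym Qe (unitv_neq0 v_unit) Qv.
have card_a : #|[pred i | m i == a]| = 1%N.
  by rewrite -m_j (@eq_card _ _ (pred1 j)) ?card1 // => i; rewrite !inE (inj_eq m_inj).
have := maxDelta_ge_eigenspace eU v_unit Qv Qsym Qe card_a.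
by have := le_L j; rewrite m_j; lra.
Qed.

Lemma DeltaStar_ge_two_eigenvalues p q : p != q -> (forall i, m i = p \/ m i = q) ->
  \tr Q = p + p + q -> DeltaStar_ge Q U (Num.min (p + p) q).
Proof.
move=> neq_pq m_pq trQ v [v_unit [a Qv]].
have [card_q card_p] := card_eigenvalues2 Qe neq_pq m_pq trQ.
have [j m_j] := eigenvalue_eigenbasis Qsym Qe (unitv_neq0 v_unit) Qv.
have [a_p|a_q] : a = p \/ a = q by rewrite -m_j.
  rewrite ge_min; apply/orP; right; rewrite a_p in Qv.
  by have := maxDelta_ge_eigenspace eU v_unit Qv Qsym Qe card_p; lra.
rewrite ge_min; apply/orP; left; rewrite a_q in Qv.
by have := maxDelta_ge_eigenspace eU v_unit Qv Qsym Qe card_q; lra.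
Qed.

End DeltaStar.
End Basis.
End DeltaBounds.

Definition nth3 (T : Type) (x y z : T) (i : 'I_3) : T := nth x [:: x; y; z] i.

Lemma nth3P (T : Type) (P : T -> Prop) x y z :
  P x -> P y -> P z -> forall i, P (nth3 x y z i).
Proof. by move=> Px Py Pz [[|[|[|//]]] ?]. Qed.

Lemma orthonormal3_nth3 (R : rcfType) (e1 e2 e3 : 'cV[R]_3) : orthonormal3 e1 e2 e3 ->
  forall i j, dotv (nth3 e1 e2 e3 i) (nth3 e1 e2 e3 j) = (i == j)%:R.
Proof.
case=> u1 u2 u3 [o12 o13 o23] [[|[|[|//]]] ?] [[|[|[|//]]] ?].
all: by rewrite /nth3 /= // dotvC.
Qed.

Theorem lemma2 (R : rcfType) (Q : 'M[R]_3) (l1 l2 l3 : R) (U : seq 'cV[R]_3) :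
  symmetric_mx Q -> psd_mx Q ->
  char_poly Q = ('X - l1%:P) * ('X - l2%:P) * ('X - l3%:P) ->
  let lmax := Num.max l1 (Num.max l2 l3) in
  ((exists e1 e2 e3, [/\ e1 \in U, e2 \in U & e3 \in U] /\ orthonormal3 e1 e2 e3 /\
       [/\ unit_eigvec Q e1, unit_eigvec Q e2 & unit_eigvec Q e3]) ->
     [/\ (l1 = l2 /\ l2 = l3 /\ 0 < l1 -> DeltaStar_ge Q U (2 / 3 * l1)),
         (l1 = l2 /\ l2 != l3 /\ 0 < l3 -> DeltaStar_ge Q U (Num.min (l1 + l2) l3)) &
         ([/\ l1 != l2, l1 != l3 & l2 != l3] -> DeltaStar_ge Q U (\tr Q - lmax))])
  /\
  (0 < \tr Q - 2 * lmax ->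
   (exists e1 e2 e3, [/\ e1 \in U, e2 \in U & e3 \in U] /\ orthonormal3 e1 e2 e3) ->
   DeltaStar_ge Q U (2 / 3 * (\tr Q - 2 * lmax))).
Proof.
move=> Qsym _ charQ lmax; have trQ := mxtrace_char_poly3 charQ.
have rootQ b : root (char_poly Q) b = [|| b == l1, b == l2 | b == l3].
  by rewrite charQ !rootM !root_XsubC orbA.
have le_lmax b : root (char_poly Q) b -> b <= lmax.
  by rewrite rootQ => /or3P[] /eqP->; rewrite !le_max lexx ?orbT.
split=> [[e1 [e2 [e3 [[e1U e2U e3U] [e_on [eig1 eig2 eig3]]]]]]
        | _ [e1 [e2 [e3 [[e1U e2U e3U] e_on]]]]];
  have e_on' := orthonormal3_nth3 e_on;
  have eU := nth3P (P := fun x => x \in U) e1U e2U e3U; last first.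
  exact: (DeltaStar_ge_orthonormal e_on' Qsym eU le_lmax).
have [m Qe] := fin_all_exists (fun i => proj2 (nth3P (P := unit_eigvec Q) eig1 eig2 eig3 i)).
have m_root i : root (char_poly Q) (m i).
  apply/(root_char_poly_symP _ Qsym); exists (nth3 e1 e2 e3 i) => //.
  by apply: unitv_neq0; rewrite /unitv e_on' eqxx.
split=> [[l12 [l23 _]] | [l12 [neq23 _]] | [neq12 neq13 neq23]].
- subst l2 l3; have -> : 2 / 3 * l1 = 2 / 3 * (\tr Q - 2 * l1) by rewrite trQ; ring.
  by apply: (DeltaStar_ge_orthonormal e_on' Qsym eU) => b; rewrite rootQ !orbb => /eqP->.
- subst l2; apply: (DeltaStar_ge_two_eigenvalues e_on' Qsym eU Qe neq23 _ trQ) => i.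
  by have := m_root i; rewrite rootQ orbA orbb => /orP[] /eqP; [left | right].
- apply: (DeltaStar_ge_simple_spectrum e_on' Qsym eU Qe) => [|i]; last exact/le_lmax/m_root.
  apply: (eigenbasis_inj e_on' Qsym Qe (s := [:: l1; l2; l3])) => // [|b].
    by rewrite /= !inE negb_or neq12 neq13 neq23.
  by rewrite !inE rootQ.
Qed.
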